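(* Let $k$ be a field of characteristic zero, $\lambda,\mu\in k$, ${\boldsymbol\lambda}=\begin{pmatrix}0&\lambda\\-\lambda&0\end{pmatrix}$ and ${\boldsymbol\mu}=\begin{pmatrix}0&\mu\\-\mu&0\end{pmatrix}$. Then $k_{\boldsymbol\lambda}(x_1,x_2)\cong k_{\boldsymbol\mu}(x_1,x_2)$ as Poisson algebras if and only if $\lambda=\pm\mu$.
   Context: For antisymmetric ${\boldsymbol\lambda}\in M_n(k)$, $k_{\boldsymbol\lambda}(x_1,\dots,x_n)$ is the rational function field $k(x_1,\dots,x_n)$ with the unique Poisson bracket satisfying $\{x_i,x_j\}=\lambda_{ij}x_ix_j$. *)

From HB Require Import structures.
From mathcomp Require Import all_boot all_order all_algebra.
From mathcomp Require Import mpoly.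
Set Implicit Arguments. Unset Strict Implicit. Unset Printing Implicit Defensive.
Import GRing.Theory.
Local Open Scope ring_scope.

Notation tofrac := (@FracField.tofrac _).
Notation "x %:F" := (tofrac x).

Definition ratfun2 (k : fieldType) := {fraction {mpoly k[2]}}.

Definition rconst (k : fieldType) (c : k) : ratfun2 k := (c%:MP)%:F.

Definition rx1 (k : fieldType) : ratfun2 k := ('X_(@ord0 1) : {mpoly k[2]})%:F.
Definition rx2 (k : fieldType) : ratfun2 k := ('X_(@ord_max 1) : {mpoly k[2]})%:F.

Definition is_poisson_bracket (k : fieldType) (B : ratfun2 k -> ratfun2 k -> ratfun2 k) :=
  [/\ (forall (c : k) f g h, B (rconst c * f + g) h = rconst c * B f h + B g h),
      (forall f g, B f g = - B g f),
      (forall f g h, B f (B g h) + B g (B h f) + B h (B f g) = 0) &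
      (forall f g h, B f (g * h) = B f g * h + g * B f h)].

(* The bracket of k_lambda(x_1,x_2) for lambda = [[0, l], [-l, 0]]:
   the Poisson bracket with {x_1, x_2} = l x_1 x_2 (unique by the paper). *)
Definition is_qbracket (k : fieldType) (l : k) (B : ratfun2 k -> ratfun2 k -> ratfun2 k) :=
  is_poisson_bracket B /\ B (rx1 k) (rx2 k) = rconst l * rx1 k * rx2 k.

Definition poisson_iso (k : fieldType) (B1 B2 : ratfun2 k -> ratfun2 k -> ratfun2 k)
    (phi : ratfun2 k -> ratfun2 k) :=
  [/\ bijective phi,
      (forall f g, phi (f + g) = phi f + phi g),
      (forall f g, phi (f * g) = phi f * phi g),
      (forall c : k, phi (rconst c) = rconst c) &
      (forall f g, phi (B1 f g) = B2 (phi f) (phi g))].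

(* A Poisson isomorphism phi from k_l(x1,x2) to k_m(x1,x2) produces nonzero
   f = phi x1, g = phi x2 with {f, g}_m = l f g.  In characteristic not 2 a
   biderivation of k(x1,x2) is determined by {x1, x2}, so
   {f, g}_m = m (E1 f E2 g - E2 f E1 g) for the Euler derivations
   E_i = x_i d/dx_i.  Comparing leading monomials of numerators and
   denominators turns {f, g}_m = c f g into c = m * det(exponents), an
   integer multiple of m.  By symmetry m is an integer multiple of l, so
   l = +-m in characteristic 0.  Conversely the identity, resp. the swap of
   x1 and x2, is an isomorphism when l = m, resp. l = -m. *)

From HB Require Import structures.
From mathcomp Require Import all_boot all_order all_algebra.
From mathcomp Require Import mpoly ring.
From mathcomp Require perm.
Import Order.TTheory GRing.Theory.
Set Implicit Arguments. Unset Strict Implicit. Unset Printing Implicit Defensive.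
Local Open Scope ring_scope.

Section LeibnizRule.
Variables (F : fieldType) (D : F -> F).
Hypothesis DM : forall f g, D (f * g) = D f * g + f * D g.

Lemma leibniz_div f g : g != 0 -> D (f / g) = (D f * g - f * D g) / g ^+ 2.
Proof.
move=> g0; have -> : D f = D (f / g) * g + f / g * D g by rewrite -DM divfK.
by move: (D (f / g)) => d; field.
Qed.

Lemma leibniz_logder_div f g : f != 0 -> g != 0 ->
  D (f / g) / (f / g) = (D f * g - f * D g) / (f * g).
Proof. by move=> f0 g0; rewrite leibniz_div //; field; rewrite g0 f0. Qed.

End LeibnizRule.

Section Fraction.
Variable R : idomainType.

Lemma tofrac_numden (x : {fraction R}) :
  x = (\n_(repr x))%:F / (\d_(repr x))%:F.
Proof.
rewrite -[LHS]reprK; set r := repr x.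
apply: (@mulIf _ (\d_r)%:F); first by rewrite tofrac_eq0 denom_ratioP.
rewrite mulfVK ?tofrac_eq0 ?denom_ratioP //.
unlock FracField.tofrac; rewrite -[_ * _]FracField.pi_mul.
apply/eqmodP; rewrite /= FracField.equivfE /FracField.mulf.
by rewrite !numden_Ratio ?mulr1 ?mul1r ?oner_neq0 ?denom_ratioP // mulrC.
Qed.

Lemma fracP (x : {fraction R}) : exists p q, q != 0 /\ x = p%:F / q%:F.
Proof. by exists \n_(repr x), \d_(repr x); rewrite denom_ratioP -tofrac_numden. Qed.

Lemma eq_tofrac_div (p q p' q' : R) : q != 0 -> q' != 0 ->
  (p%:F / q%:F == p'%:F / q'%:F) = (p * q' == p' * q).
Proof. by move=> q0 q'0; rewrite eqr_div ?tofrac_eq0 // -!tofracM tofrac_eq. Qed.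

Lemma tofrac_divB (p q p' q' : R) : q != 0 -> q' != 0 ->
  p%:F / q%:F - p'%:F / q'%:F = (p * q' - p' * q)%:F / (q * q')%:F.
Proof.
move=> q0 q'0; rewrite -mulNr -tofracN addf_div ?tofrac_eq0 //.
by rewrite tofracB !tofracM tofracN mulNr.
Qed.

End Fraction.

Section FractionMap.
Variables (R S : idomainType) (sg : {rmorphism R -> S}) (sg_inj : injective sg).

Definition frac_map (x : {fraction R}) : {fraction S} :=
  (sg \n_(repr x))%:F / (sg \d_(repr x))%:F.

Lemma rmorph_inj_neq0 q : q != 0 -> sg q != 0.
Proof. by rewrite -(inj_eq sg_inj) rmorph0. Qed.

Lemma frac_map_div p q : q != 0 -> frac_map (p%:F / q%:F) = (sg p)%:F / (sg q)%:F.
Proof.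
move=> q0; rewrite /frac_map; set x := p%:F / q%:F.
have d0 : \d_(repr x) != 0 := denom_ratioP _.
apply/eqP; rewrite eq_tofrac_div ?rmorph_inj_neq0 // -!rmorphM (inj_eq sg_inj).
by rewrite -eq_tofrac_div // -tofrac_numden.
Qed.

Lemma frac_map_tofrac p : frac_map p%:F = (sg p)%:F.
Proof. by rewrite -[p%:F]divr1 -tofrac1 frac_map_div ?oner_neq0 // rmorph1 tofrac1 divr1. Qed.

Lemma frac_map_is_zmod_morphism : zmod_morphism frac_map.
Proof.
move=> x y; have [p [q [q0 ->]]] := fracP x; have [p' [q' [q'0 ->]]] := fracP y.
rewrite tofrac_divB // !frac_map_div ?mulf_neq0 //.
by rewrite tofrac_divB ?rmorph_inj_neq0 // rmorphB !rmorphM.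
Qed.

Lemma frac_map_is_monoid_morphism : monoid_morphism frac_map.
Proof.
split; first by rewrite -tofrac1 frac_map_tofrac rmorph1.
move=> x y; have [p [q [q0 ->]]] := fracP x; have [p' [q' [q'0 ->]]] := fracP y.
rewrite mulrACA -invfM -!tofracM !frac_map_div ?mulf_neq0 // !rmorphM.
by rewrite invfM mulrACA.
Qed.

End FractionMap.

Lemma frac_map_involutive (R : idomainType) (sg : {rmorphism R -> R})
  (sgK : involutive sg) : involutive (frac_map sg).
Proof.
move=> x; have [p [q [q0 ->]]] := fracP x; have sg_inj := inv_inj sgK.
by rewrite !frac_map_div ?rmorph_inj_neq0 // !sgK.
Qed.

Section LeadingTerm.
Variables (n : nat) (R : idomainType).
Implicit Types (u v P Q : {mpoly R[n]}) (M : 'X_{1..n}).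

Definition mbelow u M := forall m, (M <= m)%O -> u@_m = 0.

Definition mlead_eq u (a : R) P := mbelow (u - a *: P) (mlead P).

Lemma mbelowB u v M : mbelow u M -> mbelow v M -> mbelow (u - v) M.
Proof. by move=> hu hv m hm; rewrite mcoeffB hu // hv // subr0. Qed.

Lemma mbelow_mlead_lt u M : u != 0 -> mbelow u M -> (mlead u < M)%O.
Proof. by move=> u0 hu; rewrite ltNge; apply: contra u0 => /hu/eqP; rewrite mleadc_eq0. Qed.

Lemma mbelowMr u v M N : mbelow u M -> (mlead v <= N)%O -> mbelow (u * v) (M + N)%MM.
Proof.
have [-> _ _ m _|u0 hu hv m hm] := eqVneq u 0; first by rewrite mul0r mcoeff0.
apply/mcoeff_gt_mlead/(le_lt_trans (mleadM_le u v))/(lt_le_trans _ hm).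
exact: ltmc_le_add (mbelow_mlead_lt u0 hu) hv.
Qed.

Lemma mlead_eq_le u a P : mlead_eq u a P -> (mlead u <= mlead P)%O.
Proof.
move=> hu; rewrite -[u](subrK (a *: P)).
apply: (le_trans (mleadD_le _ _)); rewrite leUx mleadZ_le andbT.
have [->|u0] := eqVneq (u - a *: P) 0; first by rewrite mlead0 le0m.
exact/ltW/mbelow_mlead_lt.
Qed.

Lemma mlead_eqZ P (a : R) : mlead_eq (a *: P) a P.
Proof. by move=> m _; rewrite subrr mcoeff0. Qed.

Lemma mlead_eq1 P : mlead_eq P 1 P.
Proof. by rewrite -{1}[P]scale1r; apply: mlead_eqZ. Qed.

Lemma mlead_eq_weight (w : 'X_{1..n} -> R) u P :
  (forall m, u@_m = w m * P@_m) -> mlead_eq u (w (mlead P)) P.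
Proof.
move=> hu m; rewrite le_eqVlt mcoeffB mcoeffZ hu => /predU1P [<-|/mcoeff_gt_mlead ->].
  by rewrite subrr.
by rewrite !mulr0 subrr.
Qed.

Lemma mlead_eqB u v a b P :
  mlead_eq u a P -> mlead_eq v b P -> mlead_eq (u - v) (a - b) P.
Proof.
move=> hu hv; rewrite /mlead_eq.
have -> : u - v - (a - b) *: P = (u - a *: P) - (v - b *: P).
  by rewrite scalerBl; ring.
exact: mbelowB.
Qed.

Lemma mlead_eqZl u a P (c : R) : mlead_eq u a P -> mlead_eq (c *: u) (c * a) P.
Proof. by move=> hu m hm; rewrite -scalerA -scalerBr mcoeffZ hu // mulr0. Qed.

Lemma mlead_eqM u v a b P Q : P != 0 -> Q != 0 ->
  mlead_eq u a P -> mlead_eq v b Q -> mlead_eq (u * v) (a * b) (P * Q).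
Proof.
move=> P0 Q0 hu hv; rewrite /mlead_eq mleadM //.
have -> : u * v - (a * b) *: (P * Q) = (u - a *: P) * v + (a *: P) * (v - b *: Q).
  by rewrite -!mul_mpolyC mpolyCM; ring.
move=> m hm; rewrite mcoeffD (mbelowMr hu (mlead_eq_le hv)) // add0r mulrC.
by rewrite addmC in hm; rewrite (mbelowMr hv (mleadZ_le a P)).
Qed.

Lemma mlead_eq_uniq u a b P : P != 0 -> mlead_eq u a P -> mlead_eq u b P -> a = b.
Proof.
move=> P0 ha hb; rewrite -mleadc_eq0 in P0; apply: (mulIf P0).
move: (ha _ (lexx _)) (hb _ (lexx _)); rewrite !mcoeffB !mcoeffZ.
by move=> /subr0_eq <- /subr0_eq.
Qed.
End LeadingTerm.

HB.instance Definition _ (k : fieldType) :=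
  GRing.RMorphism.copy (@rconst k) (@FracField.tofrac _ \o @mpolyC 2 k).

Section RationalFunctions.
Variable k : fieldType.
Local Notation K := (ratfun2 k).
Local Notation A := {mpoly k[2]}.
Local Notation x1 := (rx1 k).
Local Notation x2 := (rx2 k).

Lemma rx1_neq0 : x1 != 0.
Proof. by rewrite tofrac_eq0 -msupp_eq0 msuppX. Qed.

Lemma rx2_neq0 : x2 != 0.
Proof. by rewrite tofrac_eq0 -msupp_eq0 msuppX. Qed.

Lemma tofrac_mpolyX (m : 'X_{1..2}) : ('X_[m] : A)%:F = x1 ^+ m ord0 * x2 ^+ m ord_max.
Proof.
rewrite mpolyXE_id big_ord_recl big_ord1 tofracM !tofracXn.
by congr (_ * _ ^+ m _); apply: val_inj.
Qed.

Definition is_der (D : K -> K) :=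
  [/\ {morph D : f g / f + g},
      (forall f g, D (f * g) = D f * g + f * D g) &
      (forall c, D (rconst c) = 0)].

Lemma der0 D : is_der D -> D 0 = 0.
Proof. by case=> DD _ _; apply: (addrI (D 0)); rewrite -DD !addr0. Qed.

Lemma der_sub D1 D2 : is_der D1 -> is_der D2 -> is_der (fun f => D1 f - D2 f).
Proof.
case=> D1D D1M D1C [D2D D2M D2C]; split=> [f g|f g|c]; last by rewrite D1C D2C subrr.
  by rewrite D1D D2D opprD addrACA.
by rewrite D1M D2M; ring.
Qed.

Lemma der_scale a D : is_der D -> is_der (fun f => a * D f).
Proof.
case=> DD DM DC; split=> [f g|f g|c]; last by rewrite DC mulr0.
  by rewrite DD mulrDr.
by rewrite DM; ring.
Qed.

Lemma der_expr D a f n : is_der D -> D f = rconst a * f ->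
  D (f ^+ n) = rconst (n%:R * a) * f ^+ n.
Proof.
case=> _ DM DC Df; elim: n => [|n ih].
  by rewrite expr0 -(rmorph1 (@rconst k)) DC mul0r rmorph0 mul0r.
by rewrite exprS DM Df ih !rmorphM rmorph_nat -natr1 !rmorphD rmorph1; ring.
Qed.

Definition mweight (a1 a2 : k) (m : 'X_{1..2}) : k :=
  (m ord0)%:R * a1 + (m ord_max)%:R * a2.

Lemma der_mpoly D a1 a2 : is_der D ->
  D x1 = rconst a1 * x1 -> D x2 = rconst a2 * x2 ->
  forall p : A, exists r : A,
    D p%:F = r%:F /\ forall m, r@_m = mweight a1 a2 m * p@_m.
Proof.
move=> Dder Dx1 Dx2; have [DD DM DC] := Dder.
elim/mpolyind => [|c m p _ _ [r [Dp rE]]].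
  by exists 0; split=> [|m]; rewrite ?tofrac0 ?der0 // !mcoeff0 mulr0.
exists ((mweight a1 a2 m * c) *: 'X_[m] + r); split.
  rewrite !tofracD DD Dp -!mul_mpolyC !tofracM DM DC mul0r add0r tofrac_mpolyX.
  rewrite DM (der_expr _ Dder Dx1) (der_expr _ Dder Dx2) /mweight.
  by rewrite !rmorphM !rmorphD !rmorphM; ring.
move=> m'; rewrite !mcoeffD !mcoeffZ !mcoeffX rE mulrDr.
by case: eqP => [<-|_]; rewrite ?mulr0 // !mulr1 mulrC.
Qed.

Lemma der_eq0 D : is_der D -> D x1 = 0 -> D x2 = 0 -> forall f, D f = 0.
Proof.
move=> Dder Dx1 Dx2; have [_ DM _] := Dder.
have Dpoly p : D p%:F = 0.
  have Dxi x : D x = 0 -> D x = rconst 0 * x by rewrite rmorph0 mul0r.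
  have [r [-> rE]] := der_mpoly Dder (Dxi _ Dx1) (Dxi _ Dx2) p.
  suff -> : r = 0 by rewrite tofrac0.
  by apply/mpolyP => m; rewrite rE /mweight !mulr0 addr0 mul0r mcoeff0.
move=> f; have [p [q [q0 ->]]] := fracP f.
have qF0 : q%:F != 0 :> K by rewrite tofrac_eq0.
by rewrite (leibniz_div DM _ qF0) !Dpoly mul0r mulr0 subrr mul0r.
Qed.

Lemma der_ext D1 D2 : is_der D1 -> is_der D2 ->
  D1 x1 = D2 x1 -> D1 x2 = D2 x2 -> D1 =1 D2.
Proof.
move=> D1d D2d e1 e2 f; apply/eqP; rewrite -subr_eq0; apply/eqP.
by apply: (der_eq0 (der_sub D1d D2d)); rewrite /= ?e1 ?e2 subrr.
Qed.

(* [(d1, d2)] is the exponent [mlead p - mlead q] of [f = p / q]. *)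
Lemma logder_mlead f : f != 0 -> exists (P : A) (d1 d2 : int), P != 0 /\
  (forall D a1 a2, is_der D -> D x1 = rconst a1 * x1 -> D x2 = rconst a2 * x2 ->
   exists u : A, D f / f = u%:F / P%:F /\ mlead_eq u (d1%:~R * a1 + d2%:~R * a2) P).
Proof.
have [p [q [q0 ->]]] := fracP f => f0.
have p0 : p != 0 by apply: contra f0 => /eqP ->; rewrite tofrac0 mul0r.
exists (p * q), ((mlead p ord0)%:Z - (mlead q ord0)%:Z),
  ((mlead p ord_max)%:Z - (mlead q ord_max)%:Z); split; first exact: mulf_neq0.
move=> D a1 a2 Dder Dx1 Dx2; have [_ DM _] := Dder.
have [rp [Dp rpE]] := der_mpoly Dder Dx1 Dx2 p.
have [rq [Dq rqE]] := der_mpoly Dder Dx1 Dx2 q.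
exists (rp * q - p * rq); split.
  have pF0 : p%:F != 0 :> K by rewrite tofrac_eq0.
  have qF0 : q%:F != 0 :> K by rewrite tofrac_eq0.
  by rewrite (leibniz_logder_div DM pF0 qF0) Dp Dq tofracB !tofracM.
have lead_pq := mlead_eqB (mlead_eqM p0 q0 (mlead_eq_weight rpE) (mlead_eq1 (P := q)))
                          (mlead_eqM p0 q0 (mlead_eq1 (P := p)) (mlead_eq_weight rqE)).
congr (mlead_eq _ _ _): lead_pq.
by rewrite /mweight !rmorphB /= -!pmulrn; ring.
Qed.

Definition is_bider (B : K -> K -> K) :=
  [/\ (forall (c : k) f g h, B (rconst c * f + g) h = rconst c * B f h + B g h),
      (forall f g, B f g = - B g f) &
      (forall f g h, B f (g * h) = B f g * h + g * B f h)].

Lemma poisson_bider B : is_poisson_bracket B -> is_bider B.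
Proof. by case. Qed.

Section Biderivation.
Variable B : K -> K -> K.
Hypothesis Bbider : is_bider B.

Lemma bider_addl f g h : B (f + g) h = B f h + B g h.
Proof. by have [BL _ _] := Bbider; have := BL 1 f g h; rewrite rmorph1 !mul1r. Qed.

Lemma bider_constl c f : B (rconst c) f = 0.
Proof.
have [BL BN BM] := Bbider.
have Bf0 : B f 0 = 0 by have := BM f 0 0; rewrite !mul0r mulr0 addr0.
have Bf1 : B f 1 = 0.
  by apply: (addrI (B f 1)); rewrite addr0 -[in RHS](mulr1 1) BM mulr1 mul1r.
by have := BL c 1 0 f; rewrite mulr1 addr0 (BN 1) (BN 0) Bf1 Bf0 oppr0 mulr0 addr0.
Qed.

Lemma bider_derr f : is_der (B f).
Proof.
have [_ BN BM] := Bbider; split=> // [g h|c]; last by rewrite BN bider_constl oppr0.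
by rewrite BN bider_addl opprD -!BN.
Qed.

Lemma bider_derl g : is_der (B^~ g).
Proof.
have [_ BN BM] := Bbider; split=> [f h|f h|c]; [exact: bider_addl| |exact: bider_constl].
by rewrite BN BM opprD (BN g f) (BN g h) mulrN mulNr !opprK.
Qed.

Lemma bider_alt (two_neq0 : 2%:R != 0 :> k) f : B f f = 0.
Proof.
have [_ BN _] := Bbider; have : B f f * 2%:R = 0 by rewrite mulr_natr mulr2n {1}BN addNr.
move/eqP; rewrite mulf_eq0 -(rmorph_nat (@rconst k)) fmorph_eq0 (negbTE two_neq0).
by rewrite orbF => /eqP.
Qed.

End Biderivation.

Lemma bider_eq (two_neq0 : 2%:R != 0 :> k) B1 B2 : is_bider B1 -> is_bider B2 ->
  B1 x1 x2 = B2 x1 x2 -> B1 =2 B2.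
Proof.
move=> B1b B2b B12; have [_ B1N _] := B1b; have [_ B2N _] := B2b.
have B1xx f : B1 f f = 0 := bider_alt B1b two_neq0 f.
have B2xx f : B2 f f = 0 := bider_alt B2b two_neq0 f.
have Bx1 : B1 x1 =1 B2 x1.
  by apply: der_ext (bider_derr B1b _) (bider_derr B2b _) _ B12; rewrite B1xx B2xx.
have Bx2 : B1 x2 =1 B2 x2.
  apply: der_ext (bider_derr B1b _) (bider_derr B2b _) _ _; last by rewrite B1xx B2xx.
  by rewrite B1N B2N B12.
move=> f g.
exact: der_ext (bider_derl B1b g) (bider_derl B2b g) (Bx1 g) (Bx2 g) f.
Qed.

Lemma wedge_bider c D1 D2 : is_der D1 -> is_der D2 ->
  is_bider (fun f g => rconst c * (D1 f * D2 g - D2 f * D1 g)).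
Proof.
case=> D1D D1M D1C [D2D D2M D2C].
split=> [a f g h|f g|f g h]; last by rewrite D1M D2M; ring.
  by rewrite D1D D2D D1M D2M D1C D2C !mul0r !add0r; ring.
by ring.
Qed.

Lemma zero_bider : is_bider (fun _ _ => 0).
Proof. by split=> *; rewrite ?mulr0 ?mul0r ?addr0 ?oppr0. Qed.

Section EulerDerivations.
Variables (B : K -> K -> K) (l : k).
Hypotheses (Bbider : is_bider B) (two_neq0 : 2%:R != 0 :> k) (l_neq0 : l != 0).
Hypothesis Bx1x2 : B x1 x2 = rconst l * x1 * x2.

(* The derivations [x1 d/dx1] and [x2 d/dx2], recovered from the bracket. *)
Definition euler1 f := (rconst (- l) * x2)^-1 * B x2 f.
Definition euler2 f := (rconst l * x1)^-1 * B x1 f.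

Lemma euler1_der : is_der euler1.
Proof. exact/der_scale/bider_derr. Qed.

Lemma euler2_der : is_der euler2.
Proof. exact/der_scale/bider_derr. Qed.

Lemma euler1_x1 : euler1 x1 = rconst 1 * x1.
Proof.
have [_ BN _] := Bbider.
have lx2_neq0 : rconst (- l) * x2 != 0.
  by apply: mulf_neq0 rx2_neq0; rewrite fmorph_eq0 oppr_eq0.
rewrite /euler1 BN Bx1x2 rmorph1 mul1r; apply: (mulfI lx2_neq0).
by rewrite (mulVKf lx2_neq0) rmorphN; ring.
Qed.

Lemma euler1_x2 : euler1 x2 = rconst 0 * x2.
Proof. by rewrite /euler1 bider_alt // rmorph0 !mul0r mulr0. Qed.

Lemma euler2_x1 : euler2 x1 = rconst 0 * x1.
Proof. by rewrite /euler2 bider_alt // rmorph0 !mul0r mulr0. Qed.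

Lemma euler2_x2 : euler2 x2 = rconst 1 * x2.
Proof.
have lx1_neq0 : rconst l * x1 != 0.
  by apply: mulf_neq0 rx1_neq0; rewrite fmorph_eq0.
by rewrite /euler2 Bx1x2 rmorph1 mul1r (mulKf lx1_neq0).
Qed.

Lemma bider_euler :
  B =2 (fun f g => rconst l * (euler1 f * euler2 g - euler2 f * euler1 g)).
Proof.
apply: bider_eq (wedge_bider l euler1_der euler2_der) _ => //.
by rewrite Bx1x2 euler1_x1 euler1_x2 euler2_x1 euler2_x2 rmorph0 rmorph1; ring.
Qed.

End EulerDerivations.

Lemma rconst_tofrac (c : k) (p : A) : rconst c * p%:F = (c *: p)%:F.
Proof. by rewrite -mul_mpolyC tofracM. Qed.

(* The integer is the determinant of the leading exponents of [f] and [g]. *)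
Lemma bider_eigen_int (two_neq0 : 2%:R != 0 :> k) B l f g c :
  is_bider B -> B x1 x2 = rconst l * x1 * x2 ->
  f != 0 -> g != 0 -> B f g = rconst c * f * g -> exists n : int, c = l * n%:~R.
Proof.
move=> Bb Bx f0 g0 Bfg; have fg0 := mulf_neq0 f0 g0.
have [l0|l0] := eqVneq l 0.
  exists 0; rewrite mulr0z mulr0; move: Bfg.
  rewrite (bider_eq two_neq0 Bb zero_bider) /=; last by rewrite Bx l0 rmorph0 !mul0r.
  by move/esym/eqP; rewrite -mulrA mulf_eq0 (negbTE fg0) orbF fmorph_eq0 => /eqP.
have [E1d E2d] := (euler1_der l Bb, euler2_der l Bb).
have E1x := (euler1_x1 Bb l0 Bx, euler1_x2 l Bb two_neq0).
have E2x := (euler2_x1 l Bb two_neq0, euler2_x2 l0 Bx).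
have [P [d1 [d2 [P0 fP]]]] := logder_mlead f0.
have [Q [e1 [e2 [Q0 gQ]]]] := logder_mlead g0.
have [u1 [fu1 u1P]] := fP _ _ _ E1d E1x.1 E1x.2.
have [u2 [fu2 u2P]] := fP _ _ _ E2d E2x.1 E2x.2.
have [v1 [gv1 v1Q]] := gQ _ _ _ E1d E1x.1 E1x.2.
have [v2 [gv2 v2Q]] := gQ _ _ _ E2d E2x.1 E2x.2.
have PQ_eq : c *: (P * Q) = l *: (u1 * v2 - u2 * v1).
  have PQF0 : (P * Q)%:F != 0 :> K by rewrite tofrac_eq0 mulf_neq0.
  have cE : rconst c = rconst l * (u1 * v2 - u2 * v1)%:F / (P * Q)%:F.
    rewrite -mulrA tofracB !tofracM mulrBl -!mulf_div -fu1 -fu2 -gv1 -gv2.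
    by rewrite !mulf_div -mulrBl mulrA -bider_euler // Bfg -(mulrA (rconst c)) (mulfK fg0).
  by apply/eqP; rewrite -tofrac_eq -!rconst_tofrac cE (divfK PQF0).
exists (d1 * e2 - d2 * e1).
have := mlead_eqZl l (mlead_eqB (mlead_eqM P0 Q0 u1P v2Q) (mlead_eqM P0 Q0 u2P v1Q)).
rewrite -PQ_eq => /(mlead_eq_uniq (mulf_neq0 P0 Q0) (@mlead_eqZ _ _ (P * Q) c)) ->.
by rewrite rmorphB !rmorphM; ring.
Qed.

Definition swap_vars : {rmorphism A -> A} := msym (perm.tperm ord0 ord_max).

Lemma swap_varsK : involutive swap_vars.
Proof. by move=> p; rewrite /swap_vars /= -msymMm perm.tperm2 msym1m. Qed.

Definition swap : {rmorphism K -> K} := HB.pack (frac_map swap_vars)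
  (GRing.isZmodMorphism.Build K K _ (frac_map_is_zmod_morphism (inv_inj swap_varsK)))
  (GRing.isMonoidMorphism.Build K K _
    (frac_map_is_monoid_morphism (inv_inj swap_varsK))).

Lemma swap_involutive : involutive swap.
Proof. exact: frac_map_involutive swap_varsK. Qed.

Lemma swap_tofrac p : swap p%:F = (swap_vars p)%:F.
Proof. exact/frac_map_tofrac/inv_inj/swap_varsK. Qed.

Lemma swap_rconst c : swap (rconst c) = rconst c.
Proof. by rewrite swap_tofrac /swap_vars /= /msym mmapC. Qed.

Lemma swap_x1 : swap x1 = x2.
Proof. by rewrite swap_tofrac /swap_vars /= /msym mmapX mmap1U perm.tpermL. Qed.

Lemma swap_x2 : swap x2 = x1.
Proof. by rewrite -swap_x1 swap_involutive. Qed.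

Lemma qbracket_iso (two_neq0 : 2%:R != 0 :> k) (l m : k) (Bl Bm : K -> K -> K) :
  is_qbracket l Bl -> is_qbracket m Bm -> l = m \/ l = - m ->
  exists phi, poisson_iso Bl Bm phi.
Proof.
move=> [/poisson_bider Blb Blx] [/poisson_bider Bmb Bmx] [lm|lm].
  exists id; split=> //; first exact: inv_bij.
  by apply: bider_eq => //; rewrite Blx Bmx lm.
pose Bs f g := swap (Bm (swap f) (swap g)).
have Bsb : is_bider Bs.
  have [BL BN BM] := Bmb; split=> [c f g h|f g|f g h]; rewrite /Bs.
  - by rewrite rmorphD rmorphM swap_rconst BL rmorphD rmorphM swap_rconst.
  - by rewrite BN rmorphN.
  - rewrite (rmorphM swap g) BM rmorphD (rmorphM swap (Bm _ _)).
    by rewrite (rmorphM swap (swap g)) !swap_involutive.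
have BlBs : Bl =2 Bs.
  apply: bider_eq Blb Bsb _ => //; have [_ BN _] := Bmb.
  rewrite Blx /Bs swap_x1 swap_x2 BN Bmx rmorphN !rmorphM swap_rconst swap_x1 swap_x2.
  by rewrite lm rmorphN; ring.
exists swap; split; [exact: inv_bij swap_involutive|exact: rmorphD|exact: rmorphM|
  exact: swap_rconst|].
by move=> f g; rewrite BlBs /Bs !swap_involutive.
Qed.

Lemma poisson_iso_sym (B1 B2 : K -> K -> K) phi : poisson_iso B1 B2 phi ->
  exists psi, poisson_iso B2 B1 psi.
Proof.
case=> [[psi phiK psiK] phiD phiM phiC phiB]; exists psi; split.
- by exists phi.
- by move=> f g; apply: (can_inj phiK); rewrite phiD !psiK.
- by move=> f g; apply: (can_inj phiK); rewrite phiM !psiK.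
- by move=> c; apply: (can_inj phiK); rewrite phiC psiK.
- by move=> f g; apply: (can_inj phiK); rewrite phiB !psiK.
Qed.

Lemma poisson_iso_eigen (B1 B2 : K -> K -> K) phi f g c : poisson_iso B1 B2 phi ->
  f != 0 -> g != 0 -> B1 f g = rconst c * f * g ->
  [/\ phi f != 0, phi g != 0 & B2 (phi f) (phi g) = rconst c * phi f * phi g].
Proof.
case=> [[psi phiK _] phiD phiM phiC phiB] f0 g0 Bfg.
have phi0 : phi 0 = 0 by apply: (addrI (phi 0)); rewrite -phiD !addr0.
have phi_neq0 h : h != 0 -> phi h != 0.
  by apply: contra => /eqP h0; rewrite -[h]phiK h0 -{1}phi0 phiK.
by split; [exact: phi_neq0|exact: phi_neq0|rewrite -phiB Bfg !phiM phiC].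
Qed.

End RationalFunctions.

Lemma pchar0_intr_eq0 (F : fieldType) : [pchar F] =i pred0 ->
  forall z : int, (z%:~R == 0 :> F) = (z == 0).
Proof. by move=> /pcharf0P F0 [] n; rewrite ?NegzE ?intrN ?oppr_eq0 F0. Qed.

Lemma eq_pm_of_int_multiples (F : fieldType) (l m : F) (n n' : int) :
  [pchar F] =i pred0 -> l = m * n%:~R -> m = l * n'%:~R -> l = m \/ l = - m.
Proof.
move=> F0 lE mE; have [m0|m0] := eqVneq m 0; first by left; rewrite lE m0 mul0r.
have : (n * n' - 1)%:~R == 0 :> F.
  rewrite intrB intrM subr_eq0; apply/eqP; apply: (mulfI m0).
  by rewrite mulr1 mulrA -lE -mE.
rewrite mulrC pchar0_intr_eq0 // subr_eq0 => /eqP /intUnitRing.unitzPl.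
by rewrite qualifE => /orP [] /eqP n1; [left|right]; rewrite lE n1 ?mulr1 // mulrN1.
Qed.

Theorem corollary5p4 (k : fieldType) (hchar : [pchar k] =i pred0) (l m : k)
    (Bl Bm : ratfun2 k -> ratfun2 k -> ratfun2 k)
    (hBl : is_qbracket l Bl) (hBm : is_qbracket m Bm) :
  (exists phi : ratfun2 k -> ratfun2 k, poisson_iso Bl Bm phi) <-> (l = m \/ l = - m).
Proof.
have two_neq0 : 2%:R != 0 :> k by rewrite (pcharf0P _).1.
split=> [[phi phi_iso]|]; last exact: qbracket_iso.
have [psi psi_iso] := poisson_iso_sym phi_iso.
have [[/poisson_bider Blb Blx] [/poisson_bider Bmb Bmx]] := (hBl, hBm).
have [x1_neq0 x2_neq0] := (rx1_neq0 k, rx2_neq0 k).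
have [phi1_neq0 phi2_neq0 Bm_phi] := poisson_iso_eigen phi_iso x1_neq0 x2_neq0 Blx.
have [n lE] := bider_eigen_int two_neq0 Bmb Bmx phi1_neq0 phi2_neq0 Bm_phi.
have [psi1_neq0 psi2_neq0 Bl_psi] := poisson_iso_eigen psi_iso x1_neq0 x2_neq0 Bmx.
have [n' mE] := bider_eigen_int two_neq0 Blb Blx psi1_neq0 psi2_neq0 Bl_psi.
exact: eq_pm_of_int_multiples hchar lE mE.
Qed.
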